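(* Let $n$ be a nonnegative integer and let $a,b,c\in\mathbb{C}$ be such that all hypergeometric series and quotients below are defined (no lower parameter is zero or a negative integer). Then \[ {}_4F_3\!\left(\left.{-n,a,a-c-n,c \atop \frac{a-n}{2},\frac{1+a-n}{2},b}\right| \frac{1}{4}\right) =\frac{(1+c-a)_n(b-c)_n}{(1-a)_n(b)_n}\, {}_4F_3\!\left(\left.{-n,1+c-b,1-b-n,c \atop \frac{1+c-b-n}{2},\frac{2+c-b-n}{2},1+c-a}\right| \frac{1}{4}\right). \]
   Context: For $a\in\mathbb{C}$, $(a)_0=1$ and $(a)_k=a(a+1)\cdots(a+k-1)$ for $k\ge1$. The hypergeometric series is ${}_rF_s\!\left(\left.{\alpha_1,\ldots,\alpha_r\atop \beta_1,\ldots,\beta_s}\right|z\right)=\sum_{k\ge0}\frac{(\alpha_1)_k\cdots(\alpha_r)_k}{k!(\beta_1)_k\cdots(\beta_s)_k}z^k$, with no lower parameter zero or a negative integer; when an upper parameter is $-n$ it is a finite sum over $0\le k\le n$. *)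

From mathcomp Require Import all_boot all_order all_algebra.
From mathcomp Require Import complex.
From mathcomp Require Import reals.
Set Implicit Arguments. Unset Strict Implicit. Unset Printing Implicit Defensive.
Import Order.TTheory GRing.Theory Num.Theory.
Local Open Scope ring_scope.

Definition poch {F : comRingType} (a : F) (k : nat) : F :=
  \prod_(i < k) (a + i%:R).

Definition admissible_lower {F : comRingType} (b : F) : Prop :=
  forall m : nat, b <> - m%:R.

Definition F43_term {F : fieldType} (n : nat) (a2 a3 a4 b1 b2 b3 z : F) : F :=
  \sum_(k < n.+1)
    (poch (- n%:R) k * poch a2 k * poch a3 k * poch a4 k)
    / (k`!%:R * poch b1 k * poch b2 k * poch b3 k) * z ^+ k.

From mathcomp Require Import all_boot all_order all_algebra.
From mathcomp Require Import complex reals.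
From mathcomp Require Import ring zify.
Set Implicit Arguments. Unset Strict Implicit. Unset Printing Implicit Defensive.
Import GRing.Theory Num.Theory.
Local Open Scope ring_scope.

(* Clearing denominators, the left side times (1-a)_n (b)_n becomes S(1+c-a, b), where
     S(d, b) = sum_k (-1)^k C(n,k) (c)_k (d-c-k)_(n-k) (d+n-k)_k (b+k)_(n-k);
   this uses the duplication formula (u/2)_k ((1+u)/2)_k 4^k = (u)_(2k) and the reflection
   (1-x-m)_m = (-1)^m (x)_m. The right side is the left side with (a, b) replaced by
   (1+c-b, 1+c-a), so it becomes S(b, 1+c-a), and the theorem is the symmetry of S.
   To prove S(d, b) = S(b, d), expand (b-c-k)_(n-k) (b+n-k)_k in the basis (b+i)_(n-i) by
   Chu-Vandermonde, exchange the two sums and evaluate the sum over k by Chu-Vandermonde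
   again. *)

Lemma bin_trinomial (n k i : nat) :
  ('C(n, k) * 'C(n - k, i) = 'C(n, i) * 'C(n - i, k))%N.
Proof.
have vanish j l : (n < j + l)%N -> ('C(n, j) * 'C(n - j, l) = 0)%N.
  move=> hn; case: (leqP j n) => hj; last by rewrite bin_small.
  by rewrite (@bin_small (n - j)) ?muln0 //; lia.
have fact j l : (j + l <= n)%N ->
    ('C(n, j) * 'C(n - j, l) * (j`! * l`! * (n - j - l)`!) = n`!)%N.
  move=> hn; rewrite -(@bin_fact n j); last by lia.
  by rewrite -(@bin_fact (n - j) l); [ring | lia].
case: (leqP (k + i) n) => hn; last by rewrite !vanish // addnC.
apply/eqP; rewrite -(@eqn_pmul2r (k`! * i`! * (n - k - i)`!)); last first.
  by rewrite !muln_gt0 !fact_gt0.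
rewrite fact // (mulnC k`!) (_ : (n - k - i = n - i - k)%N); last by lia.
by rewrite fact // addnC.
Qed.

Section Pochhammer.
Variable R : comNzRingType.
Implicit Types (a b c d x y : R) (k m n : nat).

Lemma poch0 x : poch x 0 = 1.
Proof. by rewrite /poch big_ord0. Qed.

Lemma pochD x m k : poch x (m + k) = poch x m * poch (x + m%:R) k.
Proof.
rewrite /poch big_split_ord /=; congr (_ * _).
by apply: eq_bigr => i _; rewrite natrD addrA.
Qed.

Lemma pochSr x m : poch x m.+1 = poch x m * (x + m%:R).
Proof. by rewrite -addn1 pochD /poch big_ord1 addr0. Qed.

Lemma pochSl x m : poch x m.+1 = x * poch (x + 1) m.
Proof. by rewrite -add1n pochD /poch big_ord1 addr0. Qed.

Lemma poch_reflect x m : poch (1 - x - m%:R) m = (-1) ^+ m * poch x m.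
Proof.
elim: m => [|m IHm]; first by rewrite !poch0 mul1r.
rewrite pochSl pochSr exprS -natr1.
have -> : 1 - x - (m%:R + 1) + 1 = 1 - x - m%:R by ring.
rewrite IHm; ring.
Qed.

Lemma poch_oppn n k : poch (- n%:R) k = (-1) ^+ k * (n ^_ k)%:R :> R.
Proof.
elim: k => [|k IHk]; first by rewrite poch0 mul1r.
rewrite pochSr IHk ffactnSr exprS.
have [kn | nk] := leqP k n; first by rewrite natrM natrB //; ring.
by rewrite ffact_small // mul0n !mulr0 mul0r.
Qed.

Lemma poch_reflect_mul a n k : (k <= n)%N ->
  poch (1 - a) n * poch a k
  = (-1) ^+ k * poch (a - n%:R) (2 * k) * poch (1 - a - k%:R) (n - k).
Proof.
move=> k_le_n.
have sgn : (-1) ^+ n * (-1) ^+ (n - k) = (-1) ^+ k :> R.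
  by rewrite -{1}(subnK k_le_n) exprD mulrAC -expr2 sqrr_sign mul1r.
have -> : poch (1 - a) n = (-1) ^+ n * poch (a - n%:R) n.
  by rewrite -poch_reflect; congr poch; ring.
rewrite -[LHS]mulrA.
have -> : poch (a - n%:R) n * poch a k
    = poch (a - n%:R) (2 * k) * poch (a - n%:R + (2 * k)%:R) (n - k).
  by rewrite -pochD (_ : 2 * k + (n - k) = n + k)%N ?pochD ?subrK //; lia.
have -> : poch (a - n%:R + (2 * k)%:R) (n - k) = (-1) ^+ (n - k) * poch (1 - a - k%:R) (n - k).
  by rewrite -poch_reflect; congr poch; rewrite natrB // natrM; ring.
by rewrite -sgn; ring.
Qed.

Lemma poch_vandermonde m x y :
  \sum_(p < m.+1) 'C(m, p)%:R * (-1) ^+ p * poch y p * poch (x + p%:R) (m - p)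
  = poch (x - y) m.
Proof.
elim: m x y => [|m IHm] x y; first by rewrite big_ord1 !poch0 !mulr1.
have -> : poch (x - y) m.+1
    = (x + m%:R) * poch (x - y) m - y * poch (x + 1 - (y + 1)) m.
  by rewrite pochSr (_ : x + 1 - (y + 1) = x - y); ring.
rewrite -!IHm !mulr_sumr big_ord_recl /=.
under eq_bigr => p _ do rewrite /bump /= add1n binS natrD !mulrDl.
rewrite big_split /= addrA.
congr (_ + _); last first.
  rewrite -sumrN; apply: eq_bigr => i _.
  rewrite subSS pochSl exprS (_ : x + i.+1%:R = x + 1 + i%:R); last by rewrite -natr1; ring.
  ring.
transitivity (\sum_(i < m.+2)
    'C(m, i)%:R * (-1) ^+ i * poch y i * poch (x + i%:R) (m.+1 - i)).
  by rewrite [in RHS]big_ord_recl /= !bin0.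
rewrite big_ord_recr /= bin_small // !mul0r addr0.
apply: eq_bigr => [[i /= hi]] _.
rewrite subSn // pochSr -addrA -natrD subnKC //; ring.
Qed.

Lemma poch_vandermondeD N m k x y : (m < N)%N ->
  \sum_(p < N) 'C(m, p)%:R * (-1) ^+ p * poch y p * poch (x + p%:R) (m + k - p)
  = poch (x - y) m * poch (x + m%:R) k.
Proof.
move=> m_lt_N; rewrite -poch_vandermonde mulr_suml.
rewrite (big_ord_widen N (fun p => 'C(m, p)%:R * (-1) ^+ p * poch y p
  * poch (x + p%:R) (m - p) * poch (x + m%:R) k)) // [RHS]big_mkcond /=.
apply: eq_bigr => p _; case: ltnP => [p_le_m | m_lt_p]; last first.
  by rewrite bin_small // !mul0r.
by rewrite -addnBAC // pochD -addrA -natrD subnKC // mulrA.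
Qed.

Lemma poch_expand n k b c : (k <= n)%N ->
  poch (b - c - k%:R) (n - k) * poch (b + (n - k)%:R) k
  = \sum_(i < n.+1)
      'C(n - k, i)%:R * (-1) ^+ i * poch (c + k%:R) i * poch (b + i%:R) (n - i).
Proof.
move=> k_le_n; rewrite (_ : b - c - k%:R = b - (c + k%:R)); last by ring.
by rewrite -(poch_vandermondeD (N := n.+1)) ?subnK // ltnS leq_subr.
Qed.

Lemma sum_trinomial_poch n i c d : (i <= n)%N ->
  \sum_(k < n.+1) (-1) ^+ k * 'C(n, k)%:R * 'C(n - k, i)%:R
      * poch c k * poch (c + k%:R) i * poch (d + k%:R) (n - k)
  = 'C(n, i)%:R * poch c i * poch (d - c - i%:R) (n - i) * poch (d + (n - i)%:R) i.
Proof.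
move=> i_le_n; rewrite (_ : d - c - i%:R = d - (c + i%:R)); last by ring.
rewrite -mulrA -(poch_vandermondeD (N := n.+1)) ?ltnS ?leq_subr // subnK // mulr_sumr.
apply: eq_bigr => k _.
have binC : 'C(n, k)%:R * 'C(n - k, i)%:R = 'C(n, i)%:R * 'C(n - i, k)%:R :> R.
  by rewrite -!natrM bin_trinomial.
have pochC : poch c k * poch (c + k%:R) i = poch c i * poch (c + i%:R) k.
  by rewrite -!pochD addnC.
transitivity ((-1) ^+ k * ('C(n, k)%:R * 'C(n - k, i)%:R)
    * (poch c k * poch (c + k%:R) i) * poch (d + k%:R) (n - k)); first by ring.
by rewrite binC pochC; ring.
Qed.

Definition cleared_F43 n c d b : R :=
  \sum_(k < n.+1) (-1) ^+ k * 'C(n, k)%:R * poch c k * poch (d - c - k%:R) (n - k)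
    * poch (d + (n - k)%:R) k * poch (b + k%:R) (n - k).

Lemma cleared_F43C n c d b : cleared_F43 n c d b = cleared_F43 n c b d.
Proof.
symmetry; transitivity (\sum_(k < n.+1) \sum_(i < n.+1)
    (-1) ^+ i * poch (b + i%:R) (n - i) * ((-1) ^+ k * 'C(n, k)%:R * 'C(n - k, i)%:R
      * poch c k * poch (c + k%:R) i * poch (d + k%:R) (n - k))).
  apply: eq_bigr => [[k /= k_lt_n]] _.
  transitivity ((-1) ^+ k * 'C(n, k)%:R * poch c k * poch (d + k%:R) (n - k)
    * (poch (b - c - k%:R) (n - k) * poch (b + (n - k)%:R) k)); first by ring.
  by rewrite poch_expand // mulr_sumr; apply: eq_bigr => i _; ring.
rewrite exchange_big; apply: eq_bigr => [[i /= i_lt_n]] _.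
by rewrite -mulr_sumr sum_trinomial_poch //; ring.
Qed.

End Pochhammer.

Lemma poch_neq0 (F : idomainType) (x : F) k : admissible_lower x -> poch x k != 0.
Proof.
move=> adm; elim: k => [|k IHk]; first by rewrite poch0 oner_neq0.
by rewrite pochSr mulf_neq0 // addr_eq0; apply/eqP.
Qed.

Lemma poch_duplication (F : fieldType) (u : F) k : 2 != 0 :> F ->
  poch (u / 2) k * poch ((1 + u) / 2) k * 4 ^+ k = poch u (2 * k).
Proof.
move=> two_neq0; elim: k => [|k IHk]; first by rewrite !poch0 !mulr1.
by rewrite mulnS addnC pochD -IHk !pochSr exprS poch0 mul1r natrM; field.
Qed.

Lemma F43_summand_cleared (F : numFieldType) n k (a b c : F) : (k <= n)%N ->
  poch ((a - n%:R) / 2) k != 0 -> poch ((1 + a - n%:R) / 2) k != 0 -> poch b k != 0 ->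
  (poch (- n%:R) k * poch a k * poch (a - c - n%:R) k * poch c k)
    / (k`!%:R * poch ((a - n%:R) / 2) k * poch ((1 + a - n%:R) / 2) k * poch b k)
    * (1 / 4) ^+ k * (poch (1 - a) n * poch b n)
  = (-1) ^+ k * 'C(n, k)%:R * poch c k * poch (1 - a - k%:R) (n - k)
    * poch (1 + c - a + (n - k)%:R) k * poch (b + k%:R) (n - k).
Proof.
move=> k_le_n half_neq0 half1_neq0 b_neq0.
have fact_neq0 : k`!%:R != 0 :> F by rewrite pnatr_eq0 -lt0n fact_gt0.
have four_neq0 : 4 ^+ k != 0 :> F by rewrite expf_neq0 // pnatr_eq0.
have dup := poch_duplication (a - n%:R) k (_ : 2 != 0 :> F).
rewrite addrA in dup.
transitivity ((-1) ^+ k * 'C(n, k)%:R * poch (a - c - n%:R) k * poch c k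
    * (poch (1 - a) n * poch a k) / (poch ((a - n%:R) / 2) k
    * poch ((1 + a - n%:R) / 2) k * 4 ^+ k) * (poch b n / poch b k)).
  rewrite poch_oppn -bin_ffact natrM div1r exprVn; field.
  by rewrite b_neq0 four_neq0 half1_neq0 half_neq0 fact_neq0.
rewrite poch_reflect_mul // -dup ?pnatr_eq0 //.
have -> : poch (a - c - n%:R) k = (-1) ^+ k * poch (1 + c - a + (n - k)%:R) k.
  by rewrite -poch_reflect; congr poch; rewrite natrB //; ring.
rewrite (_ : poch b n = poch b k * poch (b + k%:R) (n - k)); last by rewrite -pochD subnKC.
(* three factors (-1)^k remain, which field can only cancel as constants *)
rewrite -signr_odd; case: (odd k) => /=; field;
  by rewrite b_neq0 four_neq0 half1_neq0 half_neq0.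
Qed.

Lemma F43_cleared (F : numFieldType) n (a b c : F) :
  admissible_lower ((a - n%:R) / 2) -> admissible_lower ((1 + a - n%:R) / 2) ->
  admissible_lower b ->
  F43_term n a (a - c - n%:R) c ((a - n%:R) / 2) ((1 + a - n%:R) / 2) b (1 / 4)
    * (poch (1 - a) n * poch b n)
  = cleared_F43 n c (1 + c - a) b.
Proof.
move=> adm_half adm_half1 adm_b; rewrite /F43_term /cleared_F43 mulr_suml.
apply: eq_bigr => [[k /= k_lt_n]] _.
rewrite F43_summand_cleared ?poch_neq0 // (_ : 1 + c - a - c = 1 - a) //; ring.
Qed.

Theorem proposition5p1 (R : realType) (n : nat) (a b c : R[i])
  (h1 : admissible_lower ((a - n%:R) / 2))
  (h2 : admissible_lower ((1 + a - n%:R) / 2))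
  (h3 : admissible_lower b)
  (h4 : admissible_lower ((1 + c - b - n%:R) / 2))
  (h5 : admissible_lower ((2 + c - b - n%:R) / 2))
  (h6 : admissible_lower (1 + c - a))
  (h7 : poch (1 - a) n != 0) :
  F43_term n a (a - c - n%:R) c ((a - n%:R) / 2) ((1 + a - n%:R) / 2) b (1 / 4)
  = (poch (1 + c - a) n * poch (b - c) n) / (poch (1 - a) n * poch b n)
    * F43_term n (1 + c - b) (1 - b - n%:R) c
        ((1 + c - b - n%:R) / 2) ((2 + c - b - n%:R) / 2) (1 + c - a) (1 / 4).
Proof.
have lhs := F43_cleared c h1 h2 h3.
have adm_half1 : admissible_lower ((1 + (1 + c - b) - n%:R) / 2).
  by rewrite (_ : 1 + (1 + c - b) = 2 + c - b) //; ring.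
have rhs := F43_cleared c h4 adm_half1 h6.
rewrite (_ : 1 + c - (1 + c - b) = b) in rhs; last by ring.
rewrite cleared_F43C -lhs in rhs.
rewrite (_ : 1 + c - b - c - n%:R = 1 - b - n%:R) in rhs; last by ring.
rewrite (_ : 1 + (1 + c - b) - n%:R = 2 + c - b - n%:R) in rhs; last by ring.
rewrite (_ : 1 - (1 + c - b) = b - c) in rhs; last by ring.
have den_neq0 : poch (1 - a) n * poch b n != 0 by rewrite mulf_neq0 // poch_neq0.
apply: (mulIf den_neq0); rewrite -rhs; field.
by rewrite h7 poch_neq0.
Qed.
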